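(* For $n>2$ and a fixed pair $i<j$ in $\{1,\dots,n\}$, the map $w^{\mathcal{P}}_{\{i,j\}}\colon G_{n,\mathcal{P}}^2\to F_n^2$ defined below is well defined, i.e. its value on a word does not change when the relations of $G_{n,\mathcal{P}}^2$ are applied to the word.
   Context: $G_{n,\mathcal{P}}^2$ has generators $a_{kl}^{\epsilon}$ ($\{k,l\}\subset\{1,\dots,n\}$, $\epsilon\in\{0,1\}$, with $a^\epsilon_{kl}=a^\epsilon_{lk}$) and relations $(a_{kl}^\epsilon)^2=1$; $a_{kl}^{\epsilon}a_{st}^{\epsilon'}=a_{st}^{\epsilon'}a_{kl}^{\epsilon}$ for $\{k,l\}\cap\{s,t\}=\emptyset$; $a_{kl}^{\epsilon_{kl}}a_{ks}^{\epsilon_{ks}}a_{ls}^{\epsilon_{ls}}=a_{ls}^{\epsilon_{ls}}a_{ks}^{\epsilon_{ks}}a_{kl}^{\epsilon_{kl}}$ for distinct $k,l,s$ with $\epsilon_{kl}+\epsilon_{ks}+\epsilon_{ls}\equiv0\pmod2$. Let $F_n^2$ be the group generated by all maps $\sigma\colon\{1,\dots,n\}\setminus\{i,j\}\to\mathbb{Z}_2$ subject only to the relations $\sigma^2=1$ (a free product of copies of $\mathbb{Z}_2$). For a word $\beta$ in the generators of $G_{n,\mathcal{P}}^2$, each occurrence $c=a_{ij}^{\epsilon}$ of a letter with index pair $\{i,j\}$, and each $k\in\{1,\dots,n\}\setminus\{i,j\}$, put $i^{\mathcal{P}}_c(k)=N^0_{ik}+N^0_{jk}\bmod 2$ if $\epsilon=0$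 and $i^{\mathcal{P}}_c(k)=N^0_{ik}+N^1_{jk}\bmod 2$ if $\epsilon=1$, where $N^{\delta}_{st}$ is the number of occurrences of $a^{\delta}_{st}$ in $\beta$ before $c$. If $c_1,\dots,c_m$ are the occurrences of letters $a_{ij}^{\epsilon}$ (any $\epsilon$) in $\beta$ in order, set $w^{\mathcal{P}}_{\{i,j\}}(\beta)=i^{\mathcal{P}}_{c_1}\cdots i^{\mathcal{P}}_{c_m}\in F_n^2$. *)

From mathcomp Require Import all_boot.
Set Implicit Arguments. Unset Strict Implicit. Unset Printing Implicit Defensive.

(* Indices {1,...,n} are represented by 'I_n = {0,...,n-1}.
   A letter a^e_{kl} is a triple ((k,l),e); canonical letters have k < l,
   which encodes the identification a^e_{kl} = a^e_{lk}. *)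
Definition letter (n : nat) := ('I_n * 'I_n * bool)%type.

Definition ltr n (k l : 'I_n) (e : bool) : letter n :=
  if k < l then ((k, l), e) else ((l, k), e).

Definition wf_letter n (x : letter n) : bool := x.1.1 < x.1.2.

Inductive Grel n : seq (letter n) -> seq (letter n) -> Prop :=
| Grel_inv (k l : 'I_n) (e : bool) : k != l ->
    Grel [:: ltr k l e; ltr k l e] [::]
| Grel_comm (k l s t : 'I_n) (e e' : bool) : uniq [:: k; l; s; t] ->
    Grel [:: ltr k l e; ltr s t e'] [:: ltr s t e'; ltr k l e]
| Grel_tetra (k l s : 'I_n) (ekl eks els : bool) : uniq [:: k; l; s] ->
    ~~ (ekl (+) eks (+) els) ->
    Grel [:: ltr k l ekl; ltr k s eks; ltr l s els]
         [:: ltr l s els; ltr k s eks; ltr k l ekl].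

(* Equality in the group presented by the relations rel on words:
   the congruence (equivalence closure of rewriting inside a context). *)
Inductive pres_eq (T : Type) (rel : seq T -> seq T -> Prop) :
    seq T -> seq T -> Prop :=
| pres_step u v a b : rel a b -> pres_eq rel (u ++ a ++ v) (u ++ b ++ v)
| pres_refl w : pres_eq rel w w
| pres_sym w1 w2 : pres_eq rel w1 w2 -> pres_eq rel w2 w1
| pres_trans w1 w2 w3 :
    pres_eq rel w1 w2 -> pres_eq rel w2 w3 -> pres_eq rel w1 w3.

Definition Geq n : seq (letter n) -> seq (letter n) -> Prop := pres_eq (@Grel n).

(* Generators of F^2_n: maps sigma : {1..n} \ {i,j} -> Z_2 *)
Definition Fgen n (i j : 'I_n) :=
  {ffun {k : 'I_n | (k != i) && (k != j)} -> bool}.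

Inductive Frel (T : Type) : seq T -> seq T -> Prop :=
| Frel_inv (x : T) : Frel [:: x; x] [::].

Definition Feq n (i j : 'I_n) : seq (Fgen i j) -> seq (Fgen i j) -> Prop :=
  pres_eq (@Frel (Fgen i j)).

Definition Ncount n (pre : seq (letter n)) (s t : 'I_n) (d : bool) : nat :=
  count (pred1 (ltr s t d)) pre.

Definition iP n (i j : 'I_n) (pre : seq (letter n)) (e : bool) : Fgen i j :=
  [ffun k => odd (Ncount pre i (val k) false + Ncount pre j (val k) e)].

Fixpoint wP_aux n (i j : 'I_n) (pre beta : seq (letter n)) : seq (Fgen i j) :=
  match beta with
  | [::] => [::]
  | x :: beta' =>
      (if (x.1.1 == i) && (x.1.2 == j) then [:: iP i j pre x.2] else [::])
        ++ wP_aux i j (rcons pre x) beta'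
  end.

Definition wP n (i j : 'I_n) (beta : seq (letter n)) : seq (Fgen i j) :=
  wP_aux i j [::] beta.

(* i^P_c(k), for c = a^e_{ij} and k outside {i,j}, counts modulo 2 the letters a^0_{ik} and
   a^e_{jk} preceding c.  So it depends on the prefix only through the parities of its letter
   counts, which no relation changes, and each relation can be checked in isolation.  A relation
   contains at most one letter with index pair {i,j}; its other letters either have index pairs
   disjoint from {i,j}, or equal to it (a^e_{ij} a^e_{ij} = 1, sent to sigma sigma = 1), or, in a
   triangle relation, are the two letters at the third vertex s, whose effects on i^P(s) cancel
   precisely because the exponents sum to 0. *)
From mathcomp Require Import all_boot zify.

Set Implicit Arguments. Unset Strict Implicit. Unset Printing Implicit Defensive.

Lemma pres_eq_of_rel T (r : seq T -> seq T -> Prop) a b : r a b -> pres_eq r a b.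
Proof. by move=> rab; have := pres_step [::] [::] rab; rewrite /= !cats0. Qed.

Lemma pres_eq_cat T (r : seq T -> seq T -> Prop) p q w1 w2 :
  pres_eq r w1 w2 -> pres_eq r (p ++ w1 ++ q) (p ++ w2 ++ q).
Proof.
elim=> [u v a b rab | w | {}w1 {}w2 _ IH | {}w1 w {}w2 _ IH1 _ IH2].
- by have := pres_step (p ++ u) (v ++ q) rab; rewrite -!catA.
- exact: pres_refl.
- exact: pres_sym.
- exact: pres_trans IH2.
Qed.

Lemma pres_eq_map S T (r : seq S -> seq S -> Prop) (r' : seq T -> seq T -> Prop)
    (f : seq S -> seq T) :
  (forall u v a b, r a b -> pres_eq r' (f (u ++ a ++ v)) (f (u ++ b ++ v))) ->
  forall w1 w2, pres_eq r w1 w2 -> pres_eq r' (f w1) (f w2).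
Proof.
move=> f_step w1 w2; elim=> [u v a b | w | {}w1 {}w2 _ IH | {}w1 w {}w2 _ IH1 _ IH2].
- exact: f_step.
- exact: pres_refl.
- exact: pres_sym.
- exact: pres_trans IH2.
Qed.

Section Letters.

Variable n : nat.
Implicit Types (k l s t : 'I_n) (x y : letter n).

Lemma ltrC k l d : ltr k l d = ltr l k d.
Proof. by rewrite /ltr; case: ltngtP => // /val_inj->. Qed.

Lemma ltr2 k l d : (ltr k l d).2 = d.
Proof. by rewrite /ltr; case: ifP. Qed.

Lemma ltr_eq k l s t d d' : (ltr k l d == ltr s t d') =
  (d == d') && ((k == s) && (l == t) || (k == t) && (l == s)).
Proof.
rewrite /ltr -!val_eqE /=.
by case: ifP => ?; case: ifP => ?; rewrite !xpair_eqE -!val_eqE /=;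
  case: d; case: d' => //=; rewrite ?andbT ?andbF //; lia.
Qed.

Definition parity_eq (p q : seq (letter n)) :=
  forall x, odd (count_mem x p) = odd (count_mem x q).

Lemma parity_eq_rcons p q y : parity_eq p q -> parity_eq (rcons p y) (rcons q y).
Proof. by move=> pq x; rewrite -!cats1 !count_cat !oddD pq. Qed.

Lemma Grel_parity_eq pre a b : Grel a b -> parity_eq (pre ++ a) (pre ++ b).
Proof.
move=> rab x; rewrite !count_cat !oddD; congr (_ (+) _).
by case: rab => * /=; rewrite ?addn0 ?addnn ?odd_double //; congr odd; lia.
Qed.

End Letters.

Section Invariant.

Variables (n : nat) (i j : 'I_n).
Hypothesis lt_ij : i < j.
Implicit Types (k l s t m : 'I_n) (x y : letter n) (d e : bool).

Lemma eq_ijF : (i == j) = false.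
Proof. by rewrite -val_eqE ltn_eqF. Qed.

Definition ij_letter x := (x.1.1 == i) && (x.1.2 == j).

Definition flip y e m := (y == ltr i m false) (+) (y == ltr j m e).

Lemma iP_rcons pre y e (m : {m : 'I_n | (m != i) && (m != j)}) :
  iP i j (rcons pre y) e m = iP i j pre e m (+) flip y e (val m).
Proof.
rewrite !ffunE /Ncount -!cats1 !count_cat /= !addn0 !oddD !oddb /flip.
by rewrite -!addbA (addbCA (y == _)).
Qed.

Lemma iP_parity_eq p q e : parity_eq p q -> iP i j p e = iP i j q e.
Proof. by move=> pq; apply/ffunP => m; rewrite !ffunE /Ncount !oddD !pq. Qed.

Lemma wP_aux_cons pre x w : wP_aux i j pre (x :: w) =
  (if ij_letter x then [:: iP i j pre x.2] else [::]) ++ wP_aux i j (rcons pre x) w.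
Proof. by []. Qed.

Lemma wP_aux_cat pre u v :
  wP_aux i j pre (u ++ v) = wP_aux i j pre u ++ wP_aux i j (pre ++ u) v.
Proof.
elim: u pre => [|x u IH] pre /=; first by rewrite cats0.
by rewrite IH catA cat_rcons.
Qed.

Lemma wP_aux_parity_eq p q w : parity_eq p q -> wP_aux i j p w = wP_aux i j q w.
Proof.
elim: w p q => [|x w IH] p q pq //=.
by rewrite (iP_parity_eq _ pq) (IH _ _ (parity_eq_rcons _ pq)).
Qed.

Lemma ij_ltr k l d :
  ij_letter (ltr k l d) = (k == i) && (l == j) || (k == j) && (l == i).
Proof. by rewrite /ij_letter /ltr; case: ifP => ? /=; rewrite -!val_eqE /=; lia. Qed.

Lemma ij_ltrP k l d : ij_letter (ltr k l d) -> k = i /\ l = j \/ k = j /\ l = i.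
Proof. by rewrite ij_ltr => /orP[] /andP[/eqP-> /eqP->]; [left | right]. Qed.

Lemma ij_ltr_out k l d : l != i -> l != j -> ~~ ij_letter (ltr k l d).
Proof. by rewrite ij_ltr => /negPf-> /negPf->; rewrite !andbF. Qed.

Lemma ij_ltr_third k l s d : ij_letter (ltr k l d) -> k != s -> l != s -> (s != i) && (s != j).
Proof. by case/ij_ltrP=> -[-> ->]; rewrite ![s == _]eq_sym => -> ->. Qed.

Lemma flip_ltr_i s m d e : m != i -> flip (ltr i s d) e m = ~~ d && (s == m).
Proof.
move=> mi; rewrite /flip !ltr_eq eqxx eq_ijF (eq_sym i) (negPf mi) eqbF_neg.
by rewrite !andbF orbF addbF.
Qed.

Lemma flip_ltr_j s m d e : m != j -> flip (ltr j s d) e m = (d == e) && (s == m).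
Proof.
move=> mj; rewrite /flip !ltr_eq eqxx (eq_sym j i) eq_ijF (eq_sym j) (negPf mj).
by rewrite !andbF orbF.
Qed.

Lemma flip_ltr_out k l m d e :
  (k != i) && (k != j) -> (l != i) && (l != j) -> flip (ltr k l d) e m = false.
Proof.
case/andP=> /negPf ki /negPf kj /andP[/negPf li /negPf lj].
by rewrite /flip !ltr_eq ki kj li lj !andbF.
Qed.

(* The parity condition of the relation [a_{kl} a_{ks} a_{ls} = a_{ls} a_{ks} a_{kl}] is exactly
   what makes the two letters at the third vertex s act alike on i^P. *)
Lemma flip_triangle k l s m ekl eks els :
  ij_letter (ltr k l ekl) -> m != i -> m != j -> ~~ (ekl (+) eks (+) els) ->
  flip (ltr k s eks) ekl m = flip (ltr l s els) ekl m.
Proof.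
move=> /ij_ltrP[] [-> ->] mi mj;
  rewrite flip_ltr_i // flip_ltr_j //;
  by case: ekl; case: eks; case: els.
Qed.

Lemma iP_rcons_flip0 pre y e :
  (forall m, m != i -> m != j -> flip y e m = false) -> iP i j (rcons pre y) e = iP i j pre e.
Proof.
move=> y0; apply/ffunP => m; have /andP[mi mj] := valP m.
by rewrite iP_rcons y0 ?addbF.
Qed.

Lemma iP_rcons_flip_eq pre y z e :
  (forall m, m != i -> m != j -> flip y e m = flip z e m) ->
  iP i j (rcons pre y) e = iP i j (rcons pre z) e.
Proof.
move=> yz; apply/ffunP => m; have /andP[mi mj] := valP m.
by rewrite !iP_rcons yz.
Qed.

Lemma iP_rcons2_flip_eq pre y z e :
  (forall m, m != i -> m != j -> flip y e m = flip z e m) ->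
  iP i j (rcons (rcons pre y) z) e = iP i j pre e.
Proof.
move=> yz; apply/ffunP => m; have /andP[mi mj] := valP m.
by rewrite !iP_rcons yz ?addbK.
Qed.

Lemma wP_aux_sq pre k l e :
  Feq (wP_aux i j pre [:: ltr k l e; ltr k l e]) [::].
Proof.
rewrite !wP_aux_cons ltr2; case xij: (ij_letter _); last exact: pres_refl.
have -> : ltr k l e = ltr i j e by case/ij_ltrP: xij => -[-> ->]; rewrite // ltrC.
rewrite /= iP_rcons_flip0 => [|m mi mj]; first exact/pres_eq_of_rel/Frel_inv.
by rewrite flip_ltr_i // eq_sym (negPf mj) andbF.
Qed.

Lemma wP_aux_comm_ij pre x k l d : ij_letter x ->
  (k != i) && (k != j) -> (l != i) && (l != j) ->
  wP_aux i j pre [:: x; ltr k l d] = wP_aux i j pre [:: ltr k l d; x].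
Proof.
move=> xij kij lij; have /andP[li lj] := lij.
rewrite !wP_aux_cons xij (negPf (ij_ltr_out _ _ li lj)) /= iP_rcons_flip0 // => m _ _.
exact: flip_ltr_out.
Qed.

Lemma wP_aux_comm pre k l s t e e' : uniq [:: k; l; s; t] ->
  wP_aux i j pre [:: ltr k l e; ltr s t e'] = wP_aux i j pre [:: ltr s t e'; ltr k l e].
Proof.
rewrite [uniq _]/= !inE !negb_or => /and4P[/and3P[_ ks kt] /andP[ls lt] st _].
case xij: (ij_letter (ltr k l e)).
  by apply: wP_aux_comm_ij => //; apply: ij_ltr_third xij _ _.
case yij: (ij_letter (ltr s t e')).
  by symmetry; apply: wP_aux_comm_ij => //; apply: ij_ltr_third yij _ _; rewrite eq_sym.
by rewrite !wP_aux_cons xij yij.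
Qed.

Lemma wP_aux_tetra pre k l s ekl eks els : uniq [:: k; l; s] -> ~~ (ekl (+) eks (+) els) ->
  wP_aux i j pre [:: ltr k l ekl; ltr k s eks; ltr l s els] =
  wP_aux i j pre [:: ltr l s els; ltr k s eks; ltr k l ekl].
Proof.
rewrite [uniq _]/= !inE negb_or andbT => /andP[/andP[kl ks] ls] par.
case xij: (ij_letter (ltr k l ekl)).
  have /andP[si sj] := ij_ltr_third xij ks ls.
  rewrite !wP_aux_cons xij !(negPf (ij_ltr_out _ _ si sj)) /= ltr2.
  rewrite iP_rcons2_flip_eq // => m mi mj.
  by symmetry; apply: flip_triangle.
case yij: (ij_letter (ltr k s eks)).
  have sl : s != l by rewrite eq_sym.
  have /andP[li lj] := ij_ltr_third yij kl sl.
  have znij : ij_letter (ltr l s els) = false by rewrite ltrC (negPf (ij_ltr_out _ _ li lj)).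
  rewrite !wP_aux_cons yij znij (negPf (ij_ltr_out _ _ li lj)) /= ltr2.
  rewrite (iP_rcons_flip_eq _ (z := ltr l s els)) // => m mi mj.
  by rewrite (ltrC l s); apply: flip_triangle; rewrite // (addbC eks).
case zij: (ij_letter (ltr l s els)).
  have [lk sk] : l != k /\ s != k by rewrite ![_ == k]eq_sym.
  have /andP[ki kj] := ij_ltr_third zij lk sk.
  have xnij : ij_letter (ltr k l ekl) = false by rewrite ltrC (negPf (ij_ltr_out _ _ ki kj)).
  have ynij : ij_letter (ltr k s eks) = false by rewrite ltrC (negPf (ij_ltr_out _ _ ki kj)).
  rewrite !wP_aux_cons zij xnij ynij /= ltr2 iP_rcons2_flip_eq // => m mi mj.
  rewrite (ltrC k l) (ltrC k s); apply: flip_triangle => //.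
  by move: par; rewrite addbC addbA.
by rewrite !wP_aux_cons xij yij zij.
Qed.

Lemma Grel_wP_aux pre a b : Grel a b -> Feq (wP_aux i j pre a) (wP_aux i j pre b).
Proof.
case=> [k l e _ | k l s t e e' klst | k l s ekl eks els kls par].
- exact: wP_aux_sq.
- by rewrite wP_aux_comm //; apply: pres_refl.
- by rewrite wP_aux_tetra //; apply: pres_refl.
Qed.

Lemma wP_Grel_step u v a b :
  Grel a b -> Feq (wP i j (u ++ a ++ v)) (wP i j (u ++ b ++ v)).
Proof.
move=> rab; rewrite /wP !wP_aux_cat /= (wP_aux_parity_eq _ (Grel_parity_eq u rab)).
exact/pres_eq_cat/Grel_wP_aux.
Qed.

End Invariant.

Theorem mainTheorem9 (n : nat) (i j : 'I_n) (beta beta' : seq (letter n)) :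
  2 < n -> i < j ->
  all (@wf_letter n) beta -> all (@wf_letter n) beta' ->
  Geq beta beta' ->
  @Feq n i j (wP i j beta) (wP i j beta').
Proof.
move=> _ lt_ij _ _; apply: pres_eq_map => u v a b.
exact: wP_Grel_step.
Qed.
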